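(* For fixed integers $2\le j\le n$ and every $d\in\{1,\dots,n-j+1\}$, $$\mathbb{P}(D_{n,j}=d)=\frac{\Gamma(d)\Gamma\!\left(j-\tfrac12\right)}{\Gamma\!\left(n-\tfrac12\right)}\left(\frac{\Gamma(n-1)\;{}_3F_2\!\left(\tfrac{2-d}{2},\tfrac{1-d}{2},2-j;\tfrac12,2-n;1\right)}{\Gamma(d)\,\Gamma(j-1)}-\frac{\Gamma\!\left(n-\tfrac32\right)\;{}_3F_2\!\left(\tfrac{3-d}{2},\tfrac{2-d}{2},\tfrac52-j;\tfrac32,\tfrac52-n;1\right)}{\Gamma(d-1)\,\Gamma\!\left(j-\tfrac32\right)}\right),$$ where $1/\Gamma(0)=0$ (so the second term vanishes for $d=1$) and each ${}_3F_2$ is the terminating finite sum obtained because one of its numerator parameters is a nonpositive integer (the sum stops before any denominator Pochhammer symbol vanishes).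
   Context: A plane-oriented recursive tree (PORT) is the random sequence of trees $(T_n)_{n\ge1}$ defined as follows. $T_1$ is a single node labeled $1$ (the root). For $n\ge2$, $T_n$ is obtained from $T_{n-1}$ by adding a node labeled $n$ and an edge joining it to a node $i\in\{1,\dots,n-1\}$ of $T_{n-1}$, where, conditionally on $T_1,\dots,T_{n-1}$, node $i$ is chosen with probability $(c_{n-1,i}+1)/(2n-3)$, with $c_{n-1,i}$ the number of children of $i$ in $T_{n-1}$. $D_{n,j}$ denotes the degree of the node labeled $j$ in $T_n$. The generalized hypergeometric function is ${}_pF_q(a_1,\dots,a_p;b_1,\dots,b_q;z)=\sum_{s\ge0}\frac{\langle a_1\rangle_s\cdots\langle a_p\rangle_s}{\langle b_1\rangle_s\cdots\langle b_q\rangle_s}\frac{z^s}{s!}$, where $\langle x\rangle_s=x(x+1)\cdots(x+s-1)$, $\langle x\rangle_0=1$. *)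

From Stdlib Require Import Reals List Arith.
Import ListNotations.
Open Scope R_scope.

(* ---------- The PORT process as an explicit finite probability space ----------
   An outcome of (T_1,...,T_{m+1}) is the list of parents [p_2; ...; p_{m+1}]
   where p_k is the node to which node k attaches. *)

Definition children (ps : list nat) (i : nat) : nat := count_occ Nat.eq_dec ps i.

(* port_paths m = all parent lists of T_{m+1} with their probabilities. *)
Fixpoint port_paths (m : nat) : list (list nat * R) :=
  match m with
  | O => [([], 1)]
  | S m' =>
      (* adding node k = m'+2 to T_{k-1} = T_{m'+1}, nodes 1..m'+1,
         denominator 2k-3 = 2m'+1 *)
      flat_map (fun pp : list nat * R =>
        let (ps, p) := pp in
        map (fun i => (ps ++ [i],
                       p * ((INR (children ps i) + 1) / INR (2 * m' + 1))))
            (seq 1 (m' + 1)))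
        (port_paths m')
  end.

Definition degree (ps : list nat) (j : nat) : nat :=
  children ps j + (if Nat.eqb j 1 then 0 else 1).

Definition prob_deg (n j d : nat) : R :=
  fold_right Rplus 0
    (map (fun pp : list nat * R =>
            if Nat.eqb (degree (fst pp) j) d then snd pp else 0)
         (port_paths (n - 1))).

(* ---------- Gamma at positive half-integers ----------
   GammaH k = Gamma(k/2) for k >= 1, via Gamma(1/2) = sqrt pi, Gamma(1) = 1
   and Gamma(x+1) = x Gamma(x).  (GammaH 0 is a pole; value irrelevant.) *)
Fixpoint GammaH (k : nat) : R :=
  match k with
  | O => 0
  | S O => sqrt PI
  | S (S O) => 1
  | S (S k' as k1) => (INR k' / 2) * GammaH k'
  end.

(* 1 / Gamma(k/2), with the convention 1/Gamma(0) = 0 *)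
Definition rGammaH (k : nat) : R :=
  match k with O => 0 | _ => / GammaH k end.

Fixpoint poch (x : R) (s : nat) : R :=
  match s with
  | O => 1
  | S s' => poch x s' * (x + INR s')
  end.

Definition F32 (N : nat) (a1 a2 a3 b1 b2 z : R) : R :=
  sum_f_R0 (fun s => poch a1 s * poch a2 s * poch a3 s
                     / (poch b1 s * poch b2 s) * z ^ s / INR (fact s)) N.

(* Let q_m(e) be the probability that node j has e children in T_(m+1).
   Conditioning on T_(m+1) gives
     q_(m+1)(e) = (1 - (e+1)/(2m+1)) q_m(e) + e/(2m+1) q_m(e-1),   q_(j-1)(e) = [e = 0],
   which, thanks to e C(e-1,i) = (e-i) C(e,i), is solved by the alternating sum
     q_(j-1+t)(e) = sum_i (-1)^i C(e,i) (j-1-i/2)_t / (j-1/2)_t.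
   Splitting i into even and odd indices, the duplication formula for Pochhammer
   symbols turns C(e,2s) and C(e,2s+1) into the 3F2 numerators, and the reflection
   (x-s)_t (1-x-t)_s = (x)_t (1-x)_s moves the dependence on s into the 3F2
   parameters; the remaining ratios (x)_t are ratios of Gamma values. *)

From Stdlib Require Import Reals List Arith Lia Lra.
Import ListNotations.
Open Scope R_scope.

Definition sumR {A} (l : list A) (f : A -> R) : R := fold_right Rplus 0 (map f l).

Lemma sumR_app {A} (l1 l2 : list A) f : sumR (l1 ++ l2) f = sumR l1 f + sumR l2 f.
Proof. unfold sumR; induction l1 as [|x l1 IH]; simpl; [ring | rewrite IH; ring]. Qed.

Lemma sumR_flat_map {A B} (h : A -> list B) l f :
  sumR (flat_map h l) f = sumR l (fun x => sumR (h x) f).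
Proof.
  induction l as [|x l IH]; [reflexivity |].
  cbn [flat_map]; rewrite sumR_app, IH; reflexivity.
Qed.

Lemma sumR_map {A B} (h : A -> B) l f : sumR (map h l) f = sumR l (fun x => f (h x)).
Proof. unfold sumR; rewrite map_map; reflexivity. Qed.

Lemma sumR_ext_in {A} (l : list A) f g :
  (forall x, In x l -> f x = g x) -> sumR l f = sumR l g.
Proof. intro H; unfold sumR; f_equal; apply map_ext_in, H. Qed.

Lemma sumR_plus {A} (l : list A) f g : sumR l (fun x => f x + g x) = sumR l f + sumR l g.
Proof. unfold sumR; induction l as [|x l IH]; simpl; [ring | rewrite IH; ring]. Qed.

Lemma sumR_scal {A} (l : list A) c f : sumR l (fun x => c * f x) = c * sumR l f.
Proof. unfold sumR; induction l as [|x l IH]; simpl; [ring | rewrite IH; ring]. Qed.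

Lemma sumR_seq_const a L c : sumR (seq a L) (fun _ => c) = INR L * c.
Proof.
  revert a; induction L as [|L IH]; intro a; [unfold sumR; simpl; ring |].
  cbn [seq]; unfold sumR in *; cbn [map fold_right]; rewrite IH, S_INR; ring.
Qed.

Lemma sumR_seq_delta a L j c : (a <= j < a + L)%nat ->
  sumR (seq a L) (fun i => if Nat.eqb i j then c else 0) = c.
Proof.
  revert a; induction L as [|L IH]; intros a H; [lia |].
  cbn [seq]; unfold sumR in *; cbn [map fold_right].
  destruct (Nat.eqb_spec a j) as [<- | Ha].
  - rewrite (map_ext_in _ (fun _ => 0)).
    + fold (sumR (seq (S a) L) (fun _ => 0)); rewrite sumR_seq_const; ring.
    + intros x Hx; apply in_seq in Hx; destruct (Nat.eqb_spec x a); [lia | reflexivity].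
  - rewrite IH by lia; ring.
Qed.

Lemma children_app ps i j :
  children (ps ++ [i]) j = (children ps j + if Nat.eqb i j then 1 else 0)%nat.
Proof.
  unfold children; rewrite count_occ_app; simpl.
  destruct (Nat.eq_dec i j); destruct (Nat.eqb_spec i j); lia.
Qed.

Lemma sumR_children ps a L : (forall x, In x ps -> a <= x < a + L)%nat ->
  sumR (seq a L) (fun i => INR (children ps i)) = INR (length ps).
Proof.
  induction ps as [|x ps IH] using rev_ind; intro H.
  - unfold children; simpl; rewrite sumR_seq_const; ring.
  - rewrite (sumR_ext_in _ _ (fun i => INR (children ps i) + if Nat.eqb x i then 1 else 0)).
    + rewrite sumR_plus, IH, length_app, plus_INR.
      * rewrite (sumR_ext_in _ _ (fun i => if Nat.eqb i x then 1 else 0)).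
        -- rewrite sumR_seq_delta; [reflexivity | apply H, in_or_app; right; left; auto].
        -- intros i _; rewrite Nat.eqb_sym; reflexivity.
      * intros y Hy; apply H, in_or_app; left; exact Hy.
    + intros i _; rewrite children_app, plus_INR; destruct (Nat.eqb x i); reflexivity.
Qed.

Lemma port_paths_parents m pp : In pp (port_paths m) ->
  length (fst pp) = m /\ (forall x, In x (fst pp) -> 1 <= x <= m)%nat.
Proof.
  revert pp; induction m as [|m IH]; intros pp H.
  - destruct H as [<- | []]; split; [reflexivity | intros _ []].
  - cbn [port_paths] in H; apply in_flat_map in H as [[ps p] [Hin H]].
    apply in_map_iff in H as [i [<- Hi]]; apply in_seq in Hi.
    destruct (IH _ Hin) as [Hl Hx]; cbn [fst] in *; split.
    + rewrite length_app, Hl; simpl; lia.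
    + intros x Hx'; apply in_app_or in Hx' as [Hx' | [<- | []]];
        [apply Hx in Hx' |]; lia.
Qed.

Lemma port_weights_sum ps m : length ps = m -> (forall x, In x ps -> 1 <= x <= m)%nat ->
  sumR (seq 1 (m + 1)) (fun i => (INR (children ps i) + 1) / INR (2 * m + 1)) = 1.
Proof.
  intros Hl Hx; unfold Rdiv.
  rewrite (sumR_ext_in _ _ (fun i => / INR (2 * m + 1) * INR (children ps i)
                                     + / INR (2 * m + 1) * 1)) by (intros; ring).
  rewrite sumR_plus, !sumR_scal, sumR_children, sumR_seq_const, Hl
    by (intros x Hin; apply Hx in Hin; lia).
  replace (INR (2 * m + 1)) with (INR m + INR (m + 1)) by (rewrite <- plus_INR; f_equal; lia).
  field; rewrite <- plus_INR; apply not_0_INR; lia.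
Qed.

Lemma port_paths_total m : sumR (port_paths m) snd = 1.
Proof.
  induction m as [|m IH]; [unfold sumR; simpl; ring |].
  cbn [port_paths]; rewrite sumR_flat_map, <- IH at 1; apply sumR_ext_in.
  intros [ps p] Hin; destruct (port_paths_parents _ _ Hin) as [Hl Hx]; cbn [fst] in *.
  rewrite sumR_map; cbn [snd]; rewrite sumR_scal, port_weights_sum by assumption; ring.
Qed.

Definition expect_children (m j : nat) (g : nat -> R) : R :=
  sumR (port_paths m) (fun pp => snd pp * g (children (fst pp) j)).

Lemma expect_children_ext m j g h :
  (forall c, g c = h c) -> expect_children m j g = expect_children m j h.
Proof. intro H; apply sumR_ext_in; intros; rewrite H; reflexivity. Qed.

Lemma expect_children_lin m j a b g h :
  expect_children m j (fun c => a * g c + b * h c)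
  = a * expect_children m j g + b * expect_children m j h.
Proof.
  unfold expect_children; rewrite <- !sumR_scal, <- sumR_plus.
  apply sumR_ext_in; intros; ring.
Qed.

Lemma expect_children_step m j g : (1 <= j <= m + 1)%nat ->
  expect_children (S m) j g =
  expect_children m j (fun c => (1 - (INR c + 1) / INR (2 * m + 1)) * g c
                               + (INR c + 1) / INR (2 * m + 1) * g (S c)).
Proof.
  intro Hj; unfold expect_children; cbn [port_paths]; rewrite sumR_flat_map.
  apply sumR_ext_in; intros [ps p] Hin.
  destruct (port_paths_parents _ _ Hin) as [Hl Hx]; cbn [fst snd] in *.
  set (w := fun i => (INR (children ps i) + 1) / INR (2 * m + 1)).
  set (c := children ps j).
  rewrite sumR_map; cbn [fst snd].
  rewrite (sumR_ext_in _ _ (fun i => p * g c * w i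
             + (if Nat.eqb i j then p * w j * (g (S c) - g c) else 0))).
  2:{ intros i _; unfold w; rewrite children_app.
      destruct (Nat.eqb_spec i j) as [-> |]; fold c;
        [replace (c + 1)%nat with (S c) by lia | rewrite Nat.add_0_r]; ring. }
  rewrite sumR_plus, sumR_scal, sumR_seq_delta by lia.
  unfold w; rewrite port_weights_sum by assumption; fold c; ring.
Qed.

Lemma expect_children_base j g : (1 <= j)%nat ->
  expect_children (j - 1) j g = g 0%nat.
Proof.
  intro Hj; unfold expect_children.
  rewrite (sumR_ext_in _ _ (fun pp => g 0%nat * snd pp)).
  - rewrite sumR_scal, port_paths_total; ring.
  - intros [ps p] Hin; destruct (port_paths_parents _ _ Hin) as [_ Hx]; cbn in *.
    unfold children; rewrite (proj1 (count_occ_not_In Nat.eq_dec ps j)); [ring |].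
    intro H; apply Hx in H; lia.
Qed.

Definition prob_children (m j e : nat) : R :=
  expect_children m j (fun c => if Nat.eqb c e then 1 else 0).

Lemma prob_deg_children n j d : (2 <= j)%nat -> (1 <= d)%nat ->
  prob_deg n j d = prob_children (n - 1) j (d - 1).
Proof.
  intros Hj Hd; unfold prob_deg, prob_children, expect_children, sumR.
  f_equal; apply map_ext; intros [ps p]; unfold degree; cbn [fst snd].
  replace (Nat.eqb j 1) with false by (symmetry; apply Nat.eqb_neq; lia).
  destruct (Nat.eqb_spec (children ps j + 1) d), (Nat.eqb_spec (children ps j) (d - 1));
    first [ring | lia].
Qed.

Lemma prob_children_step m j e : (1 <= j <= m + 1)%nat ->
  prob_children (S m) j e =
  (1 - (INR e + 1) / INR (2 * m + 1)) * prob_children m j e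
  + INR e / INR (2 * m + 1) * prob_children m j (pred e).
Proof.
  intro Hj; unfold prob_children; rewrite expect_children_step, <- expect_children_lin by exact Hj.
  apply expect_children_ext; intro c.
  assert (HD : INR (2 * m + 1) <> 0) by (apply not_0_INR; lia).
  destruct (Nat.eqb_spec c e), (Nat.eqb_spec (S c) e), (Nat.eqb_spec c (pred e));
    try lia; subst; cbn [pred] in *.
  all: try (replace e with 0%nat in * by lia; simpl INR); rewrite ?S_INR; field; exact HD.
Qed.

Lemma prob_children_base j e : (1 <= j)%nat ->
  prob_children (j - 1) j e = if Nat.eqb e 0 then 1 else 0.
Proof.
  intro Hj; unfold prob_children; rewrite expect_children_base by exact Hj.
  rewrite Nat.eqb_sym; reflexivity.
Qed.

Fixpoint falling (x : R) (k : nat) : R :=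
  match k with O => 1 | S k' => x * falling (x - 1) k' end.

(* Unlike Stdlib's [C a k], this vanishes for [k > a]. *)
Definition binomR (x : R) (k : nat) : R := falling x k / INR (fact k).

Lemma falling_S x k : falling x (S k) = falling x k * (x - INR k).
Proof.
  revert x; induction k as [|k IH]; intro x; [simpl; ring |].
  change (falling x (S (S k))) with (x * falling (x - 1) (S k)).
  rewrite IH, S_INR; cbn [falling]; ring.
Qed.

Lemma falling_nat_vanish a k : (a < k)%nat -> falling (INR a) k = 0.
Proof.
  revert k; induction a as [|a IH]; intros [|k] H; try lia; cbn [falling].
  - simpl; ring.
  - rewrite S_INR, Rplus_minus_r, IH by lia; ring.
Qed.

Lemma binomR_nat_vanish a k : (a < k)%nat -> binomR (INR a) k = 0.
Proof. intro H; unfold binomR; rewrite falling_nat_vanish by exact H; unfold Rdiv; ring. Qed.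

Lemma binomR_nat_C a k : (k <= a)%nat -> binomR (INR a) k = C a k.
Proof.
  intro H; unfold binomR, C.
  assert (Hf : falling (INR a) k * INR (fact (a - k)) = INR (fact a)).
  { revert a H; induction k as [|k IH]; intros a H.
    - rewrite Nat.sub_0_r; simpl; ring.
    - destruct a as [|a]; [lia |]; cbn [falling Nat.sub].
      rewrite S_INR, Rplus_minus_r, Rmult_assoc, IH, fact_simpl, mult_INR, S_INR by lia.
      ring. }
  rewrite <- Hf; field; split; apply INR_fact_neq_0.
Qed.

Lemma binomR_absorb x k : binomR x k * (x - INR k) = x * binomR (x - 1) k.
Proof.
  unfold binomR; transitivity (falling x (S k) / INR (fact k)).
  - rewrite falling_S; unfold Rdiv; ring.
  - cbn [falling]; unfold Rdiv; ring.
Qed.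

Lemma sum_f_R0_truncate f a K : (a <= K)%nat -> (forall i, (a < i)%nat -> f i = 0) ->
  sum_f_R0 f K = sum_f_R0 f a.
Proof.
  intros HK Hf; destruct (Nat.eq_dec a K) as [-> | Ha]; [reflexivity |].
  rewrite (tech2 f a K) by lia.
  rewrite (sum_eq_R0 (fun i => f (S a + i)%nat)) by (intros; apply Hf; lia); ring.
Qed.

Lemma alternating_sum_binomR a K : (a <= K)%nat ->
  sum_f_R0 (fun i => (-1) ^ i * binomR (INR a) i) K = if Nat.eqb a 0 then 1 else 0.
Proof.
  intro H; rewrite (sum_f_R0_truncate _ a) by
    (auto; intros; rewrite binomR_nat_vanish by assumption; ring).
  transitivity ((-1 + 1) ^ a).
  - rewrite binomial; apply sum_eq; intros i Hi; rewrite binomR_nat_C, pow1 by exact Hi; ring.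
  - destruct a; simpl; ring.
Qed.

Lemma poch_succ_l x s : poch x (S s) = x * poch (x + 1) s.
Proof.
  revert x; induction s as [|s IH]; intro x; [simpl; ring |].
  change (poch x (S (S s))) with (poch x (S s) * (x + INR (S s))).
  rewrite IH, S_INR; cbn [poch]; ring.
Qed.

Lemma poch_add x a b : poch x (a + b) = poch x a * poch (x + INR a) b.
Proof.
  induction b as [|b IH]; [rewrite Nat.add_0_r; simpl; ring |].
  rewrite Nat.add_succ_r; cbn [poch]; rewrite IH, plus_INR; ring.
Qed.

Lemma poch_pos x s : 0 < x -> 0 < poch x s.
Proof.
  intro Hx; induction s as [|s IH]; cbn [poch]; [lra |].
  apply Rmult_lt_0_compat; [exact IH | pose proof (pos_INR s); lra].
Qed.

Lemma poch_neq0 x s : (forall l, (l < s)%nat -> x + INR l <> 0) -> poch x s <> 0.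
Proof.
  induction s as [|s IH]; intro H; cbn [poch]; [lra |].
  apply Rmult_integral_contrapositive_currified; [apply IH; intros l Hl |]; apply H; lia.
Qed.

Lemma poch_one s : poch 1 s = INR (fact s).
Proof. induction s as [|s IH]; cbn [poch]; [reflexivity |]. rewrite IH, fact_simpl, mult_INR, S_INR; ring. Qed.

Lemma prob_children_closed_form j K t e : (1 <= j)%nat -> (e <= K)%nat ->
  prob_children (j - 1 + t) j e =
  sum_f_R0 (fun i => (-1) ^ i * binomR (INR e) i
                     * (poch (INR j - 1 - INR i / 2) t / poch (INR j - 1 / 2) t)) K.
Proof.
  intro Hj; revert e; induction t as [|t IH]; intros e He.
  - rewrite Nat.add_0_r, prob_children_base by exact Hj.
    rewrite <- (alternating_sum_binomR e K He); apply sum_eq; intros i _; simpl; field.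
  - rewrite Nat.add_succ_r, prob_children_step, !IH, !scal_sum, <- sum_plus by lia.
    apply sum_eq; intros i _; cbn [poch].
    assert (Habs : INR e * binomR (INR (pred e)) i = binomR (INR e) i * (INR e - INR i)).
    { rewrite binomR_absorb; destruct e as [|e]; [simpl; ring |].
      cbn [pred]; rewrite S_INR, Rplus_minus_r; reflexivity. }
    assert (Hq : 0 < poch (INR j - 1 / 2) t).
    { apply poch_pos; apply le_INR in Hj; simpl in Hj; lra. }
    pose proof (pos_INR t); assert (HjR : 1 <= INR j) by (apply le_INR in Hj; exact Hj).
    replace (INR (2 * (j - 1 + t) + 1)) with (2 * (INR j - 1 + INR t) + 1)
      by (rewrite plus_INR, mult_INR, plus_INR, minus_INR by exact Hj; simpl; ring).
    set (P := poch (INR j - 1 - INR i / 2) t) in *; set (Q := poch (INR j - 1 / 2) t) in *.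
    set (B := binomR (INR e) i) in *; set (B' := binomR (INR (pred e)) i) in *.
    set (D := 2 * (INR j - 1 + INR t) + 1).
    transitivity ((-1) ^ i * P / (Q * D) * (B * (D - INR e - 1) + INR e * B')).
    + unfold D; field; lra.
    + rewrite Habs; unfold D; field; lra.
Qed.

Lemma poch_reflect z s : poch (1 - z) s = (-1) ^ s * poch (z - INR s) s.
Proof.
  induction s as [|s IH]; [simpl; ring |].
  rewrite poch_succ_l with (x := z - INR (S s)).
  cbn [poch pow]; rewrite IH, S_INR.
  replace (z - (INR s + 1) + 1) with (z - INR s) by ring; ring.
Qed.

Lemma poch_shift_reflect y s t :
  poch (y - INR s) t * poch (1 - y - INR t) s = poch y t * poch (1 - y) s.
Proof.
  replace (1 - y - INR t) with (1 - (y + INR t)) by ring.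
  rewrite !poch_reflect.
  assert (Hsplit := poch_add (y - INR s) t s).
  rewrite Nat.add_comm, poch_add in Hsplit.
  replace (y - INR s + INR s) with y in Hsplit by ring.
  replace (y + INR t - INR s) with (y - INR s + INR t) by ring.
  transitivity ((-1) ^ s * (poch (y - INR s) t * poch (y - INR s + INR t) s)); [ring |].
  rewrite <- Hsplit; ring.
Qed.

Lemma poch_double y s : poch y (2 * s) = 4 ^ s * poch (y / 2) s * poch ((y + 1) / 2) s.
Proof.
  induction s as [|s IH]; [simpl; ring |].
  replace (2 * S s)%nat with (S (S (2 * s))) by lia; cbn [poch pow].
  rewrite IH, S_INR, mult_INR; simpl (INR 2); field.
Qed.

Lemma falling_poch x k : falling x k = (-1) ^ k * poch (- x) k.
Proof.
  revert x; induction k as [|k IH]; intro x; [simpl; ring |].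
  rewrite poch_succ_l; cbn [falling pow]; rewrite IH.
  replace (- (x - 1)) with (- x + 1) by ring; ring.
Qed.

Lemma binomR_even x s :
  binomR x (2 * s) = poch ((1 - x) / 2) s * poch (- x / 2) s / (poch (1 / 2) s * INR (fact s)).
Proof.
  unfold binomR; rewrite falling_poch, pow_mult, <- poch_one, !poch_double.
  replace ((-1) ^ 2) with 1 by ring; rewrite pow1.
  replace ((1 + 1) / 2) with 1 by field; replace ((- x + 1) / 2) with ((1 - x) / 2) by field.
  rewrite poch_one.
  assert (0 < poch (1 / 2) s) by (apply poch_pos; lra).
  assert (0 < INR (fact s)) by apply INR_fact_lt_0.
  assert (0 < 4 ^ s) by (apply pow_lt; lra).
  field; lra.
Qed.

Lemma binomR_odd x s :
  binomR x (2 * s + 1) =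
  x * (poch ((2 - x) / 2) s * poch ((1 - x) / 2) s / (poch (3 / 2) s * INR (fact s))).
Proof.
  unfold binomR; replace (2 * s + 1)%nat with (S (2 * s)) by lia.
  rewrite <- poch_one, poch_succ_l; cbn [falling].
  rewrite falling_poch, pow_mult, !poch_double.
  replace ((-1) ^ 2) with 1 by ring; rewrite pow1.
  replace ((1 + 1) / 2) with 1 by field; replace ((1 + 1 + 1) / 2) with (3 / 2) by field.
  replace (- (x - 1) / 2) with ((1 - x) / 2) by field.
  replace ((- (x - 1) + 1) / 2) with ((2 - x) / 2) by field.
  rewrite poch_one.
  assert (0 < poch (3 / 2) s) by (apply poch_pos; lra).
  assert (0 < INR (fact s)) by apply INR_fact_lt_0.
  assert (0 < 4 ^ s) by (apply pow_lt; lra).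
  field; lra.
Qed.

Lemma sum_f_R0_pairs f N :
  sum_f_R0 f (2 * N + 1) = sum_f_R0 (fun s => f (2 * s)%nat + f (2 * s + 1)%nat) N.
Proof.
  induction N as [|N IH]; [reflexivity |].
  replace (2 * S N + 1)%nat with (S (S (2 * N + 1))) by lia.
  cbn [sum_f_R0]; rewrite IH.
  replace (S (2 * N + 1)) with (2 * S N)%nat by lia.
  replace (S (2 * S N)) with (2 * S N + 1)%nat by lia; ring.
Qed.

(* For [2 s > e] both sides vanish even when [(2 - n)_s = 0]. *)
Lemma even_summand_reflect j n e s : (2 <= j)%nat -> (j <= n)%nat -> (e <= n - j)%nat ->
  binomR (INR e) (2 * s) * poch (INR j - 1 - INR (2 * s) / 2) (n - j)
  = poch (INR j - 1) (n - j) * binomR (INR e) (2 * s) * poch (2 - INR j) s * / poch (2 - INR n) s.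
Proof.
  intros Hj Hn He; destruct (le_lt_dec (2 * s) e) as [Hs | Hs].
  - assert (Hnz : poch (2 - INR n) s <> 0).
    { apply poch_neq0; intros l Hl.
      assert (INR l + 2 < INR n) by (replace 2 with (INR 2) by reflexivity;
                                      rewrite <- plus_INR; apply lt_INR; lia).
      lra. }
    assert (Hrefl := poch_shift_reflect (INR j - 1) s (n - j)).
    replace (1 - (INR j - 1) - INR (n - j)) with (2 - INR n) in Hrefl
      by (rewrite minus_INR by exact Hn; ring).
    replace (1 - (INR j - 1)) with (2 - INR j) in Hrefl by ring.
    replace (INR j - 1 - INR (2 * s) / 2) with (INR j - 1 - INR s)
      by (rewrite mult_INR; simpl; field).
    apply (Rmult_eq_reg_r (poch (2 - INR n) s)); [| exact Hnz].
    transitivity (binomR (INR e) (2 * s) * (poch (INR j - 1 - INR s) (n - j) * poch (2 - INR n) s));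
      [ring |].
    rewrite Hrefl; field; exact Hnz.
  - rewrite binomR_nat_vanish by exact Hs; ring.
Qed.

Lemma poch_half_integer_neq0 n s : poch (5 / 2 - INR n) s <> 0.
Proof.
  apply poch_neq0; intros l _ H.
  assert (Heq : INR (2 * n) = INR (2 * l + 5)) by (rewrite plus_INR, !mult_INR; simpl; lra).
  apply INR_eq in Heq; lia.
Qed.

Lemma odd_summand_reflect j n s : (j <= n)%nat ->
  poch (INR j - 1 - INR (2 * s + 1) / 2) (n - j)
  = poch (INR j - 3 / 2) (n - j) * poch (5 / 2 - INR j) s * / poch (5 / 2 - INR n) s.
Proof.
  intro Hn.
  assert (Hrefl := poch_shift_reflect (INR j - 3 / 2) s (n - j)).
  replace (1 - (INR j - 3 / 2) - INR (n - j)) with (5 / 2 - INR n) in Hrefl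
    by (rewrite minus_INR by exact Hn; field).
  replace (1 - (INR j - 3 / 2)) with (5 / 2 - INR j) in Hrefl by field.
  replace (INR j - 1 - INR (2 * s + 1) / 2) with (INR j - 3 / 2 - INR s)
    by (rewrite plus_INR, mult_INR; simpl; field).
  apply (Rmult_eq_reg_r (poch (5 / 2 - INR n) s)); [| apply poch_half_integer_neq0].
  rewrite Hrefl; field; apply poch_half_integer_neq0.
Qed.

Lemma prob_deg_F32 n j d :
  (2 <= j)%nat -> (j <= n)%nat -> (1 <= d)%nat -> (d <= n - j + 1)%nat ->
  prob_deg n j d =
    poch (INR j - 1) (n - j) / poch (INR j - 1 / 2) (n - j)
      * F32 n ((2 - INR d) / 2) ((1 - INR d) / 2) (2 - INR j) (1 / 2) (2 - INR n) 1
  - INR (d - 1) * poch (INR j - 3 / 2) (n - j) / poch (INR j - 1 / 2) (n - j)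
      * F32 n ((3 - INR d) / 2) ((2 - INR d) / 2) (5 / 2 - INR j) (3 / 2) (5 / 2 - INR n) 1.
Proof.
  intros Hj Hn Hd1 Hd2.
  rewrite prob_deg_children by assumption.
  replace (n - 1)%nat with (j - 1 + (n - j))%nat by lia.
  rewrite (prob_children_closed_form j (2 * n + 1)), sum_f_R0_pairs by lia.
  unfold F32; rewrite !scal_sum, <- minus_sum; apply sum_eq; intros s _.
  rewrite pow_1_even, pow_add, pow_1_even, pow1.
  transitivity (binomR (INR (d - 1)) (2 * s) * poch (INR j - 1 - INR (2 * s) / 2) (n - j)
                / poch (INR j - 1 / 2) (n - j)
              - binomR (INR (d - 1)) (2 * s + 1) * poch (INR j - 1 - INR (2 * s + 1) / 2) (n - j)
                / poch (INR j - 1 / 2) (n - j)); [unfold Rdiv; ring |].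
  rewrite even_summand_reflect, odd_summand_reflect, binomR_even, binomR_odd by lia.
  rewrite minus_INR by exact Hd1; simpl (INR 1).
  replace ((1 - (INR d - 1)) / 2) with ((2 - INR d) / 2) by field.
  replace (- (INR d - 1) / 2) with ((1 - INR d) / 2) by field.
  replace ((2 - (INR d - 1)) / 2) with ((3 - INR d) / 2) by field.
  unfold Rdiv; rewrite !Rinv_mult; ring.
Qed.

Lemma GammaH_succ2 k : (1 <= k)%nat -> GammaH (S (S k)) = INR k / 2 * GammaH k.
Proof. destruct k as [|k]; [lia | reflexivity]. Qed.

Lemma GammaH_shift k t : (1 <= k)%nat -> GammaH (k + 2 * t) = poch (INR k / 2) t * GammaH k.
Proof.
  intro Hk; induction t as [|t IH]; [rewrite Nat.add_0_r; simpl; ring |].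
  replace (k + 2 * S t)%nat with (S (S (k + 2 * t))) by lia.
  rewrite GammaH_succ2, IH, plus_INR, mult_INR by lia; cbn [poch]; simpl (INR 2); field.
Qed.

Lemma GammaH_pos k : (1 <= k)%nat -> 0 < GammaH k.
Proof.
  intro Hk; destruct (Nat.Even_or_Odd k) as [[t ->] | [t ->]].
  - replace (2 * t)%nat with (2 + 2 * (t - 1))%nat by lia.
    rewrite GammaH_shift by lia; apply Rmult_lt_0_compat; [apply poch_pos; simpl; lra | simpl; lra].
  - rewrite Nat.add_comm, GammaH_shift by lia.
    apply Rmult_lt_0_compat; [apply poch_pos; simpl; lra | apply sqrt_lt_R0, PI_RGT_0].
Qed.

Lemma GammaH_sub_ratio n j k r : (k < 2 * j)%nat -> (j <= n)%nat -> INR k = 2 * r ->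
  GammaH (2 * n - k) = poch (INR j - r) (n - j) * GammaH (2 * j - k).
Proof.
  intros Hk Hn Hr.
  replace (2 * n - k)%nat with ((2 * j - k) + 2 * (n - j))%nat by lia.
  rewrite GammaH_shift by lia; f_equal; f_equal.
  rewrite minus_INR, mult_INR, Hr by lia; simpl; field.
Qed.

Lemma GammaH_mul_rGammaH d : (1 <= d)%nat -> GammaH (2 * d) * rGammaH (2 * d - 2) = INR (d - 1).
Proof.
  intro Hd; destruct (Nat.eq_dec d 1) as [-> | Hd1]; [simpl; ring |].
  assert (HG : 0 < GammaH (2 * d - 2)) by (apply GammaH_pos; lia).
  replace (rGammaH (2 * d - 2)) with (/ GammaH (2 * d - 2))
    by (unfold rGammaH; destruct (2 * d - 2)%nat eqn:E; [lia | reflexivity]).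
  replace (2 * d)%nat with (S (S (2 * d - 2))) at 1 by lia.
  rewrite GammaH_succ2, minus_INR, (minus_INR d 1), mult_INR by lia.
  simpl (INR 2); simpl (INR 1); field; lra.
Qed.

Theorem corollary3p1 (n j d : nat) :
  (2 <= j)%nat -> (j <= n)%nat -> (1 <= d)%nat -> (d <= n - j + 1)%nat ->
  prob_deg n j d =
    GammaH (2 * d) * GammaH (2 * j - 1) / GammaH (2 * n - 1) *
    ( GammaH (2 * n - 2)
        * F32 n ((2 - INR d) / 2) ((1 - INR d) / 2) (2 - INR j)
                (1 / 2) (2 - INR n) 1
        / (GammaH (2 * d) * GammaH (2 * j - 2))
      - GammaH (2 * n - 3)
        * F32 n ((3 - INR d) / 2) ((2 - INR d) / 2) (5 / 2 - INR j)
                (3 / 2) (5 / 2 - INR n) 1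
        * rGammaH (2 * d - 2) / GammaH (2 * j - 3) ).
Proof.
  intros Hj Hn Hd1 Hd2.
  rewrite prob_deg_F32 by assumption.
  rewrite (GammaH_sub_ratio n j 1 (1 / 2)), (GammaH_sub_ratio n j 2 1),
    (GammaH_sub_ratio n j 3 (3 / 2)) by (lia || (simpl; lra)).
  assert (HdG : 0 < GammaH (2 * d)) by (apply GammaH_pos; lia).
  replace (rGammaH (2 * d - 2)) with (INR (d - 1) / GammaH (2 * d))
    by (rewrite <- (GammaH_mul_rGammaH d Hd1); field; lra).
  assert (0 < poch (INR j - 1 / 2) (n - j))
    by (apply poch_pos; apply le_INR in Hj; simpl in Hj; lra).
  assert (0 < GammaH (2 * j - 1)) by (apply GammaH_pos; lia).
  assert (0 < GammaH (2 * j - 2)) by (apply GammaH_pos; lia).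
  assert (0 < GammaH (2 * j - 3)) by (apply GammaH_pos; lia).
  field; lra.
Qed.
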